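(* Let $G$ be a finite group, $\hat G$ its set of irreducible unitary representations (up to equivalence), and let $\rho_A:G\to U(\mathcal{H}_A)$, $\rho_B:G\to U(\mathcal{H}_B)$ be unitary representations on finite-dimensional complex Hilbert spaces. Let $\rho(g):=\rho_A(g)\otimes\rho_B(g)$ on $\mathcal{H}_A\otimes\mathcal{H}_B$. For $\lambda\in\hat G$ let $\mathcal{H}_A^\lambda\cong V_\lambda\otimes\mathbb{C}^{m_\lambda}$ and $\mathcal{H}_B^\lambda\cong V_\lambda\otimes\mathbb{C}^{n_\lambda}$ be the $\lambda$-isotypic components, so $\mathcal{H}_A=\bigoplus_\lambda\mathcal{H}_A^\lambda$, $\mathcal{H}_B=\bigoplus_\lambda\mathcal{H}_B^\lambda$, and define $\mathcal{K}_G:=\bigoplus_{\lambda\in\hat G}\mathcal{H}_A^\lambda\otimes\mathcal{H}_B^\lambda$. Let $T_A\in\operatorname{End}_G(\mathcal{H}_A)$ and $T_B\in\operatorname{End}_G(\mathcal{H}_B)$ be self-adjoint and $K:=T_A\otimes I-I\otimes T_B$. Then: (i) $K$ commutes with $\rho(g)$ for all $g\in G$; (ii) if there are scalars $a_\lambda$ ($\lambda\in\hat G$) such that $T_A$ acts as $a_\lambda I$ on $\mathcal{H}_A^\lambda$ and $T_B$ acts as $a_\lambda I$ on $\mathcal{H}_B^\lambda$ for all $\lambda$, then $\mathcal{K}_G\subseteq\ker(K)$; (iii) if moreover $T_A=\rho_A(z)$ and $T_B=\rho_B(z)$ for a central element $z\in Z(\mathbb{C}[G])$ (extending $\rho_A,\rho_B$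 linearly), acting by the scalar $\alpha_\lambda$ on $V_\lambda$, and the map $\lambda\mapsto\alpha_\lambda$ is injective on $\hat G$, then $\ker(K)=\mathcal{K}_G$.
   Context: $\operatorname{End}_G(\mathcal{H}_A)$ denotes the operators on $\mathcal{H}_A$ commuting with $\rho_A(g)$ for all $g\in G$ (similarly for $B$). $Z(\mathbb{C}[G])$ is the center of the group algebra. $\mathcal{K}_G$ is called the diagonal isotypic subspace, and $\ker(K)$ the synchronization subspace. *)

From HB Require Import structures.
From mathcomp Require Import all_boot all_order all_algebra all_fingroup.
From mathcomp Require Import mxrepresentation character.
Set Implicit Arguments. Unset Strict Implicit. Unset Printing Implicit Defensive.
Import Order.TTheory GRing.Theory Num.Theory.
Local Open Scope ring_scope.

(* Conventions: a finite-dimensional complex Hilbert space is C^m with the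
   standard inner product, vectors are row vectors 'rV[C]_m and operators act
   on the right (v *m T), as in MathComp's mxrepresentation library.
   H_A (x) H_B is C^(m*n) with the Kronecker product [tprod] of character.v. *)

Section Defs.
Variable C : numClosedFieldType.

Definition adjmx m n (A : 'M[C]_(m, n)) : 'M[C]_(n, m) := map_mx Num.conj A^T.

Definition self_adjoint n (T : 'M[C]_n) := adjmx T = T.

Variables (gT : finGroupType) (G : {group gT}).

Definition unitary_repr n (r : mx_representation C G n) :=
  forall g, g \in G -> r g *m adjmx (r g) = 1%:M.

Definition intertwiner n (r : mx_representation C G n) (T : 'M[C]_n) :=
  forall g, g \in G -> r g *m T = T *m r g.

Definition Ghom d n (lam : mx_representation C G d) (r : mx_representation C G n)
  (f : 'M[C]_(d, n)) := forall g, g \in G -> lam g *m f = f *m r g.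

(* lambda-isotypic component of H (for an irreducible lam): the span of the
   images of all G-equivariant maps V_lam -> H, i.e. the sum of all
   subrepresentations of H isomorphic to V_lam.  Span = smallest subspace. *)
Definition in_isotypic d n (lam : mx_representation C G d)
  (r : mx_representation C G n) (v : 'rV[C]_n) :=
  forall S : 'M[C]_n,
    (forall (u : 'rV[C]_d) (f : 'M[C]_(d, n)), Ghom lam r f -> (u *m f <= S)%MS) ->
    (v <= S)%MS.

(* the diagonal isotypic subspace K_G = sum_lam H_A^lam (x) H_B^lam
   (lam ranging over irreducible representations; summing over all
   irreducibles rather than one per class gives the same subspace) *)
Definition in_KG m n (rA : mx_representation C G m) (rB : mx_representation C G n)
  (v : 'rV[C]_(m * n)) :=
  forall S : 'M[C]_(m * n),
    (forall d (lam : mx_representation C G d) (a : 'rV[C]_m) (b : 'rV[C]_n),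
        mx_irreducible lam -> in_isotypic lam rA a -> in_isotypic lam rB b ->
        (tprod a b <= S)%MS) ->
    (v <= S)%MS.

(* the group algebra C[G]: functions G -> C, with convolution product *)
Definition galg_mul (x y : gT -> C) : gT -> C :=
  fun g => \sum_(h in G) x h * y (h^-1 * g)%g.

Definition galg_central (z : gT -> C) :=
  forall x : gT -> C, forall g, g \in G -> galg_mul z x g = galg_mul x z g.

Definition repr_galg n (r : mx_representation C G n) (z : gT -> C) : 'M[C]_n :=
  \sum_(g in G) z g *: r g.

End Defs.

(* Everything rests on one observation: K kills a (x) b as soon as a and b are
   eigenvectors of T_A and T_B for a common eigenvalue.  Isotypic vectors are
   such eigenvectors under the hypothesis of (ii), which gives (ii) and, since
   z acts on V_lam by alpha_lam, the inclusion K_G <= ker K of (iii).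
   Conversely, in a product eigenbasis of the diagonalisable T_A and T_B the
   operator K is diagonal with entries a_i - b_j, so ker K is spanned by the
   products a (x) b of eigenvectors with a common eigenvalue c.  The
   c-eigenspace of rho_A(z) is a G-submodule; by Maschke it is a sum of simple
   submodules, z acts on each of them by c, so by injectivity of alpha they
   are all isomorphic to any irreducible lam with alpha_lam = c.  Hence a and
   b both lie in the lam-isotypic components and a (x) b lies in K_G. *)

From HB Require Import structures.
From mathcomp Require Import all_boot all_order all_algebra all_fingroup.
From mathcomp Require Import pgroup mxrepresentation character spectral.
Set Implicit Arguments. Unset Strict Implicit. Unset Printing Implicit Defensive.
Import Order.TTheory GRing.Theory Num.Theory.
Local Open Scope ring_scope.

Section TensorProduct.
Variable F : fieldType.

Lemma tprodl_is_linear m1 n1 m2 n2 (B : 'M[F]_(m2, n2)) :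
  linear (fun A : 'M[F]_(m1, n1) => tprod A B).
Proof.
elim: m1 => [|m1 IH] a A A' /=; first by rewrite scaler0 addr0.
rewrite !linearP /= IH -!trowbE linearP /= !trowbE.
by rewrite scale_col_mx add_col_mx.
Qed.

Lemma tprodr_is_linear m1 n1 (A : 'M[F]_(m1, n1)) m2 n2 :
  linear (@tprod F m1 n1 A m2 n2).
Proof.
elim: m1 A => [|m1 IH] A a B B' /=; first by rewrite scaler0 addr0.
by rewrite IH linearP /= scale_col_mx add_col_mx.
Qed.

Definition tprodl m1 n1 m2 n2 (B : 'M[F]_(m2, n2)) (A : 'M[F]_(m1, n1)) :=
  tprod A B.

HB.instance Definition _ m1 n1 m2 n2 (B : 'M[F]_(m2, n2)) :=
  GRing.isSemilinear.Build _ _ _ _ (@tprodl m1 n1 m2 n2 B)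
    (GRing.semilinear_linear (@tprodl_is_linear m1 n1 m2 n2 B)).

HB.instance Definition _ m1 n1 (A : 'M[F]_(m1, n1)) m2 n2 :=
  GRing.isSemilinear.Build _ _ _ _ (@tprod F m1 n1 A m2 n2)
    (GRing.semilinear_linear (@tprodr_is_linear m1 n1 A m2 n2)).

Section Bilinearity.
Variables (m1 n1 m2 n2 : nat) (A : 'M[F]_(m1, n1)) (B : 'M[F]_(m2, n2)).

Lemma tprod0l : tprod (0 : 'M[F]_(m1, n1)) B = 0.
Proof. exact: (linear0 (tprodl B)). Qed.

Lemma tprod0r : tprod A (0 : 'M[F]_(m2, n2)) = 0.
Proof. exact: linear0. Qed.

Lemma tprodZl a : tprod (a *: A) B = a *: tprod A B.
Proof. exact: (linearZZ (tprodl B)). Qed.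

Lemma tprodZr a : tprod A (a *: B) = a *: tprod A B.
Proof. exact: linearZZ. Qed.

Lemma tprod_suml (I : finType) (A_ : I -> 'M[F]_(m1, n1)) :
  tprod (\sum_i A_ i) B = \sum_i tprod (A_ i) B.
Proof. exact: (linear_sum (tprodl B)). Qed.

Lemma tprod_sumr (I : finType) (B_ : I -> 'M[F]_(m2, n2)) :
  tprod A (\sum_i B_ i) = \sum_i tprod A (B_ i).
Proof. exact: linear_sum. Qed.

End Bilinearity.

Definition kron_diff m n (A : 'M[F]_m) (B : 'M[F]_n) : 'M[F]_(m * n) :=
  tprod A 1%:M - tprod 1%:M B.

Lemma kron_diff_comm m n (A TA : 'M[F]_m) (B TB : 'M[F]_n) :
  A *m TA = TA *m A -> B *m TB = TB *m B ->
  tprod A B *m kron_diff TA TB = kron_diff TA TB *m tprod A B.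
Proof.
move=> cA cB; rewrite mulmxBr mulmxBl -!tprodE !mulmx1 !mul1mx.
by rewrite cA cB.
Qed.

Lemma kron_diff_conj m n (P : 'M[F]_m) (Q : 'M[F]_n) (A : 'M[F]_m) (B : 'M[F]_n) :
  P \in unitmx -> Q \in unitmx ->
  kron_diff (invmx P *m A *m P) (invmx Q *m B *m Q) =
  tprod (invmx P) (invmx Q) *m kron_diff A B *m tprod P Q.
Proof.
by move=> uP uQ; rewrite mulmxBr mulmxBl -!tprodE !mulmx1 !mulVmx.
Qed.

Definition tcoord m n (w : 'rV[F]_(m * n)) (i : 'I_m) (j : 'I_n) : F :=
  (w *m tprod (delta_mx i 0 : 'cV_m) (delta_mx j 0 : 'cV_n)) 0 0.

Lemma tcoord_decomp m n (w : 'rV[F]_(m * n)) :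
  w = \sum_i \sum_j tcoord w i j *: tprod (delta_mx 0 i : 'rV_m) (delta_mx 0 j : 'rV_n).
Proof.
rewrite {1}(_ : w = w *m tprod (1%:M : 'M[F]_m) (1%:M : 'M[F]_n)); last first.
  by rewrite tprod1 mulmx1.
rewrite [X in tprod X _]mx1_sum_delta tprod_suml mulmx_sumr; apply: eq_bigr => i _.
rewrite mx1_sum_delta tprod_sumr mulmx_sumr; apply: eq_bigr => j _.
rewrite -(mul_delta_mx (0 : 'I_1) i i) -(mul_delta_mx (0 : 'I_1) j j) tprodE mulmxA.
by rewrite [X in X *m _]mx11_scalar mul_scalar_mx.
Qed.

Lemma diag_mx_delta m (d : 'rV[F]_m) i :
  diag_mx d *m (delta_mx i 0 : 'cV_m) = d 0 i *: delta_mx i 0.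
Proof.
apply/matrixP => k l; rewrite mul_diag_mx !mxE.
by case: (eqVneq k i) => [->|ne]; rewrite ?mulr1 ?mulr0.
Qed.

Lemma tcoord_kron_diff_diag m n (dA : 'rV[F]_m) (dB : 'rV[F]_n) w i j :
  tcoord (w *m kron_diff (diag_mx dA) (diag_mx dB)) i j =
  (dA 0 i - dB 0 j) * tcoord w i j.
Proof.
rewrite /tcoord -mulmxA mulmxBl -!tprodE !mul1mx !diag_mx_delta.
by rewrite tprodZl tprodZr -scalerBl -scalemxAr mxE.
Qed.

Lemma row_conj_diag m (P : 'M[F]_m) (d : 'rV[F]_m) i :
  P \in unitmx -> row i P *m (invmx P *m diag_mx d *m P) = d 0 i *: row i P.
Proof.
move=> uP; rewrite -row_mul !mulmxA mulmxV // mul1mx row_mul row_diag_mx.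
by rewrite -scalemxAl -rowE.
Qed.

Lemma kron_diff_diagonalizable_ker_sub m n (TA : 'M[F]_m) (TB : 'M[F]_n)
    (P : 'M[F]_m) (Q : 'M[F]_n) (dA : 'rV[F]_m) (dB : 'rV[F]_n)
    (S : 'M[F]_(m * n)) (v : 'rV[F]_(m * n)) :
  P \in unitmx -> Q \in unitmx ->
  TA = invmx P *m diag_mx dA *m P -> TB = invmx Q *m diag_mx dB *m Q ->
  (forall (a : 'rV[F]_m) (b : 'rV[F]_n) c,
     a *m TA = c *: a -> b *m TB = c *: b -> (tprod a b <= S)%MS) ->
  v *m kron_diff TA TB = 0 -> (v <= S)%MS.
Proof.
move=> uP uQ -> -> eigS; rewrite kron_diff_conj // !mulmxA.
set w := v *m tprod (invmx P) (invmx Q) => wDM.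
have MMi : tprod P Q *m tprod (invmx P) (invmx Q) = 1%:M.
  by rewrite -tprodE !mulmxV // tprod1.
have wD : w *m kron_diff (diag_mx dA) (diag_mx dB) = 0.
  by rewrite -[LHS]mulmx1 -MMi mulmxA wDM mul0mx.
have -> : v = w *m tprod P Q by rewrite -mulmxA -tprodE !mulVmx // tprod1 mulmx1.
rewrite (tcoord_decomp w) mulmx_suml.
apply: summx_sub => i _; rewrite mulmx_suml; apply: summx_sub => j _.
rewrite -scalemxAl (_ : tprod _ _ *m _ = tprod (row i P) (row j Q)); last first.
  by rewrite !rowE tprodE.
move/(congr1 (fun x => tcoord x i j)): wD.
rewrite tcoord_kron_diff_diag [RHS]/tcoord mul0mx mxE => /eqP.
rewrite mulf_eq0 subr_eq0 => /orP[/eqP eij | /eqP ->]; last by rewrite scale0r sub0mx.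
apply: scalemx_sub; apply: (eigS _ _ (dA 0 i)); first exact: row_conj_diag.
by rewrite eij; exact: row_conj_diag.
Qed.

End TensorProduct.

Lemma normalmx_kron_diff_ker_sub (C : numClosedFieldType) m n
    (TA : 'M[C]_m) (TB : 'M[C]_n) (S : 'M[C]_(m * n)) (v : 'rV[C]_(m * n)) :
  TA \is normalmx -> TB \is normalmx ->
  (forall (a : 'rV[C]_m) (b : 'rV[C]_n) c,
     a *m TA = c *: a -> b *m TB = c *: b -> (tprod a b <= S)%MS) ->
  v *m kron_diff TA TB = 0 -> (v <= S)%MS.
Proof.
move=> /orthomx_spectralP eA /orthomx_spectralP eB.
exact: kron_diff_diagonalizable_ker_sub (spectral_unit _) (spectral_unit _) eA eB.
Qed.

Lemma self_adjoint_normalmx (C : numClosedFieldType) n (T : 'M[C]_n) :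
  self_adjoint T -> T \is normalmx.
Proof. by rewrite /self_adjoint /adjmx => adjT; apply/normalmxP; rewrite adjT. Qed.

Lemma num_pchar'G (C : numDomainType) (gT : finGroupType) (G : {group gT}) :
  pgroup [pchar C]^' G.
Proof.
rewrite pgroupE; apply: sub_in_pnat (pnat_pi (cardG_gt0 G)) => p _ _.
by rewrite inE /= (pchar_num C p).
Qed.

Section Representations.
Variables (C : numClosedFieldType) (gT : finGroupType) (G : {group gT}).

Lemma eigenspace_mxmodule n (r : mx_representation C G n) (T : 'M[C]_n) c :
  intertwiner r T -> mxmodule r (eigenspace T c).
Proof.
move=> rT; apply/mxmoduleP => g Gg.
by apply: comm_mx_stable_eigenspace; rewrite /comm_mx rT.
Qed.

Lemma mx_rsim_submod_sub d n (lam : mx_representation C G d)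
    (r : mx_representation C G n) (W : 'M[C]_n) (modW : mxmodule r W)
    (S : 'M[C]_n) :
  mx_rsim lam (submod_repr modW) ->
  (forall (u : 'rV[C]_d) f, Ghom lam r f -> (u *m f <= S)%MS) -> (W <= S)%MS.
Proof.
case=> B dimB freeB homB imS; pose f := B *m val_submod 1%:M.
have homf : Ghom lam r f.
  move=> g Gg; rewrite /f mulmxA homB // -mulmxA -[RHS]mulmxA.
  congr (_ *m _).
  by rewrite -val_submodE -[submod_repr _ _]mul1mx val_submodJ.
have fullB : row_full B by rewrite /row_full (eqP freeB) dimB.
rewrite -val_submod1 -(eqmxMfull _ fullB) -/f.
by apply/row_subP => k; rewrite rowE; exact: imS.
Qed.

Lemma in_KG_kron_diff_ker m n (rA : mx_representation C G m)
    (rB : mx_representation C G n) (TA : 'M[C]_m) (TB : 'M[C]_n)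
    (a : forall d, mx_representation C G d -> C) (v : 'rV[C]_(m * n)) :
  (forall d (lam : mx_representation C G d), mx_irreducible lam ->
     (forall u, in_isotypic lam rA u -> u *m TA = a d lam *: u) /\
     (forall w, in_isotypic lam rB w -> w *m TB = a d lam *: w)) ->
  in_KG rA rB v -> v *m kron_diff TA TB = 0.
Proof.
move=> isoT KGv; apply/sub_kermxP; apply: KGv => d lam u w irr isou isow.
apply/sub_kermxP; have [uT wT] := isoT d lam irr.
by rewrite mulmxBr -!tprodE !mulmx1 uT // wT // tprodZl tprodZr subrr.
Qed.

Variable z : gT -> C.

Lemma Ghom_repr_galg d n (lam : mx_representation C G d)
    (r : mx_representation C G n) (f : 'M[C]_(d, n)) :
  Ghom lam r f -> f *m repr_galg r z = repr_galg lam z *m f.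
Proof.
move=> homf; rewrite /repr_galg mulmx_sumr mulmx_suml; apply: eq_bigr => g Gg.
by rewrite -scalemxAr -scalemxAl homf.
Qed.

Lemma in_isotypic_eigen d n (lam : mx_representation C G d)
    (r : mx_representation C G n) c (u : 'rV[C]_n) :
  repr_galg lam z = c *: 1%:M -> in_isotypic lam r u ->
  u *m repr_galg r z = c *: u.
Proof.
move=> lamz isou; apply/eigenspaceP; apply: isou => u' f homf.
apply/eigenspaceP; rewrite -mulmxA (Ghom_repr_galg homf) lamz.
by rewrite scalemx1 mul_scalar_mx scalemxAr.
Qed.

Lemma repr_galg_submod n (r : mx_representation C G n) (W : 'M[C]_n)
    (modW : mxmodule r W) :
  val_submod (repr_galg (submod_repr modW) z) = val_submod 1%:M *m repr_galg r z.
Proof.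
rewrite /repr_galg linear_sum mulmx_sumr; apply: eq_bigr => g Gg.
by rewrite linearZ /= -scalemxAr -val_submodJ // mul1mx.
Qed.

Variable alpha : forall d, mx_representation C G d -> C.
Hypothesis repr_galg_irr : forall d (lam : mx_representation C G d),
  mx_irreducible lam -> repr_galg lam z = alpha lam *: 1%:M.
Hypothesis alpha_inj : forall d1 (lam1 : mx_representation C G d1)
    d2 (lam2 : mx_representation C G d2),
  mx_irreducible lam1 -> mx_irreducible lam2 ->
  alpha lam1 = alpha lam2 -> mx_rsim lam1 lam2.

Lemma mxsimple_eigenspace_alpha n (r : mx_representation C G n) c
    (W : 'M[C]_n) (modW : mxmodule r W) :
  mxsimple r W -> (W <= eigenspace (repr_galg r z) c)%MS ->
  alpha (submod_repr modW) = c.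
Proof.
move=> simW sWE; have irrW : mx_irreducible (submod_repr modW) by apply/submod_mx_irr.
have /eigenspaceP VT := submx_trans (val_submodP (1%:M : 'M_(\rank W))) sWE.
have := repr_galg_submod modW; rewrite repr_galg_irr // linearZ /= VT => /eqP.
rewrite eq_sym -subr_eq0 -scalerBl scaler_eq0 subr_eq0 val_submod_eq0.
case/orP=> [/eqP // | ]; rewrite -mxrank_eq0 mxrank1 mxrank_eq0 => W0.
by case: simW => _; rewrite W0.
Qed.

Lemma eigenspace_isotypic d n (lam : mx_representation C G d)
    (r : mx_representation C G n) (u : 'rV[C]_n) :
  intertwiner r (repr_galg r z) -> mx_irreducible lam ->
  (u <= eigenspace (repr_galg r z) (alpha lam))%MS -> in_isotypic lam r u.
Proof.
move=> rT irr uE S imS; apply: submx_trans uE _.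
have modE := eigenspace_mxmodule (alpha lam) rT.
have redE := mx_reducibleS modE (submx1 _) (mx_Maschke_pchar r (num_pchar'G C G)).
apply: (mx_reducible_semisimple modE redE) => -[I W ? simW defE _].
rewrite -defE; apply/sumsmx_subP => i _.
have modW := mxsimple_module (simW i).
have sWE : (W i <= eigenspace (repr_galg r z) (alpha lam))%MS.
  by rewrite -defE (sumsmx_sup i).
have irrW : mx_irreducible (submod_repr modW) by apply/submod_mx_irr.
apply: (mx_rsim_submod_sub (alpha_inj irr irrW _) imS).
by rewrite (mxsimple_eigenspace_alpha modW (simW i) sWE).
Qed.

Lemma eigenspace_alpha_exists n (r : mx_representation C G n) c (u : 'rV[C]_n) :
  intertwiner r (repr_galg r z) -> u != 0 ->
  (u <= eigenspace (repr_galg r z) c)%MS ->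
  classically (exists d (lam : mx_representation C G d),
                 mx_irreducible lam /\ alpha lam = c).
Proof.
move=> rT nzu uE; have nzE : eigenspace (repr_galg r z) c != 0.
  by apply: contraNneq nzu => E0; rewrite -submx0 -E0.
apply: classic_bind (mxsimple_exists (eigenspace_mxmodule c rT) nzE).
case=> W simW sWE; apply/classicW.
exists (\rank W), (submod_repr (mxsimple_module simW)); split.
  exact/submod_mx_irr.
exact: mxsimple_eigenspace_alpha.
Qed.

Lemma eigen_tprod_in_KG m n (rA : mx_representation C G m)
    (rB : mx_representation C G n) (a : 'rV[C]_m) (b : 'rV[C]_n) c :
  intertwiner rA (repr_galg rA z) -> intertwiner rB (repr_galg rB z) ->
  a *m repr_galg rA z = c *: a -> b *m repr_galg rB z = c *: b ->
  in_KG rA rB (tprod a b).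
Proof.
move=> rTA rTB /eigenspaceP aE /eigenspaceP bE S KS.
have [-> | nza] := eqVneq a 0; first by rewrite tprod0l sub0mx.
have [-> | nzb] := eqVneq b 0; first by rewrite tprod0r sub0mx.
apply: (eigenspace_alpha_exists rTA nza aE) => -[d [lam [irr lamc]]].
rewrite -lamc in aE bE.
by apply: (KS d lam a b irr); apply: eigenspace_isotypic.
Qed.

End Representations.

Theorem theorem5 (C : numClosedFieldType) (gT : finGroupType) (G : {group gT})
  (m n : nat) (rA : mx_representation C G m) (rB : mx_representation C G n)
  (HuA : unitary_repr rA) (HuB : unitary_repr rB)
  (TA : 'M[C]_m) (TB : 'M[C]_n)
  (HTA : intertwiner rA TA) (HTB : intertwiner rB TB)
  (HsA : self_adjoint TA) (HsB : self_adjoint TB) :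
  let K := tprod TA (1%:M : 'M[C]_n) - tprod (1%:M : 'M[C]_m) TB in
  (* (i) *)
  (forall g, g \in G -> tprod (rA g) (rB g) *m K = K *m tprod (rA g) (rB g))
  /\
  (* (ii) *)
  ((exists a : forall d, mx_representation C G d -> C,
      forall d (lam : mx_representation C G d), mx_irreducible lam ->
        (forall u, in_isotypic lam rA u -> u *m TA = a d lam *: u) /\
        (forall w, in_isotypic lam rB w -> w *m TB = a d lam *: w)) ->
   forall v : 'rV[C]_(m * n), in_KG rA rB v -> v *m K = 0)
  /\
  (* (iii) *)
  (forall z : gT -> C, galg_central G z ->
     TA = repr_galg rA z -> TB = repr_galg rB z ->
     (exists alpha : forall d, mx_representation C G d -> C,
        (forall d (lam : mx_representation C G d), mx_irreducible lam ->
           repr_galg lam z = alpha d lam *: 1%:M) /\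
        (forall d1 (lam1 : mx_representation C G d1)
                d2 (lam2 : mx_representation C G d2),
           mx_irreducible lam1 -> mx_irreducible lam2 ->
           alpha d1 lam1 = alpha d2 lam2 -> mx_rsim lam1 lam2)) ->
     forall v : 'rV[C]_(m * n), v *m K = 0 <-> in_KG rA rB v).
Proof.
move=> K; split; [|split].
- by move=> g Gg; apply: kron_diff_comm; rewrite ?HTA ?HTB.
- by case=> a isoT v; exact: in_KG_kron_diff_ker isoT.
move=> z _ eA eB [alpha [lamz alpha_inj]] v; subst TA TB; split.
- move=> Kv S KS; apply: normalmx_kron_diff_ker_sub Kv => [||a b c aE bE].
  + exact: self_adjoint_normalmx.
  + exact: self_adjoint_normalmx.
  exact: (eigen_tprod_in_KG lamz alpha_inj HTA HTB aE bE) S KS.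
- apply: in_KG_kron_diff_ker => d lam irr.
  by split=> u isou; apply: in_isotypic_eigen (lamz d lam irr) isou.
Qed.
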